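(* For $\mathsf{BST}^{\otimes}$-conjunctions, finite satisfiability and hereditarily finite satisfiability are equivalent: a $\mathsf{BST}^{\otimes}$-conjunction has a finite model if and only if it has a hereditarily finite model. Moreover, a $\mathsf{BST}^{\otimes}$-conjunction with $n$ variables is (hereditarily) finitely satisfiable if and only if it is fulfilled by an accessible $\otimes$-graph of size at most $2^{n}-1$ that admits a topological $\otimes$-order.
   Context: Sets range over the von Neumann universe of well-founded sets; $\mathsf{HF}$ denotes the set of hereditarily finite sets. For sets $s,t$, $s\otimes t=\{\{u,v\} : u\in s,\ v\in t\}$. A set assignment $M$ maps variables to sets; it satisfies a formula if the formula is true when each variable $v$ is interpreted as $Mv$. A $\mathsf{BST}^{\otimes}$-conjunction is a finite conjunction of literals of the forms $x=y\cup z$, $x=y\setminus z$, $x=y\otimes z$, $x\neq y$ ($x,y,z$ set variables). It is finitely (resp. hereditarily finitely) satisfiable if it is satisfied by some set assignment $M$ on its variables with $\bigcup_v Mv$ finite (resp. $\bigcup_v Mv\in\mathsf{HF}$). A $\otimes$-graph $\mathcal G=(\mathcal P,\mathcal N,\mathcal T)$ consists of a set $\mathcal P$ of places, the set of nodes $\mathcal N=\mathcal P\otimes\mathcal P$ (the nonempty subsets of $\mathcal P$ with at most two elements), $\mathcal P\cap\mathcal N=\emptyset$, and a target map $\mathcal T:\mathcal N\to\mathcal P(\mathcal P)$. Size of $\mathcal G$ is $|\mathcal P|$. A source place is a place belonging to no $\mathcal T(A)$; a node $A$ is a $\otimes$-node if $\mathcal T(A)\neq\emptyset$. The accessible places form the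 smallest set of places containing all source places and containing $\mathcal T(A)$ whenever all places of $A$ belong to it; $\mathcal G$ is accessible if every place is accessible. A topological $\otimes$-order of $\mathcal G$ is a total order $\prec$ on $\mathcal P$ such that $\max_\prec A\prec\max_\prec\mathcal T(A)$ for every $\otimes$-node $A$. A map $\mathfrak F:\mathrm{Vars}(\Phi)\to\mathcal P(\mathcal P)$ is $\mathcal G$-fulfilling for $\Phi$ if: (a) $\mathfrak F(x)=\mathfrak F(y)\star\mathfrak F(z)$ for each conjunct $x=y\star z$, $\star\in\{\cup,\setminus\}$; (b) $\mathfrak F(x)\neq\mathfrak F(y)$ for each conjunct $x\neq y$; (c) for each conjunct $x=y\otimes z$: (c1) $\emptyset\neq\mathcal T(\{\upsilon,\zeta\})\subseteq\mathfrak F(x)$ for all $\upsilon\in\mathfrak F(y),\zeta\in\mathfrak F(z)$; (c2) $\mathfrak F(x)\subseteq\bigcup\{\mathcal T(A):A\in\mathfrak F(y)\otimes\mathfrak F(z)\}$; (c3) $\bigcup\{\mathcal T(A):A\in\mathcal N\setminus(\mathfrak F(y)\otimes\mathfrak F(z))\}\cap\mathfrak F(x)=\emptyset$. $\mathcal G$ fulfills $\Phi$ if such a map exists. *)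

From Stdlib Require List.
From mathcomp Require Import all_boot.
Set Implicit Arguments.
Unset Strict Implicit.
Unset Printing Implicit Defensive.

(* Well-founded sets: Aczel's model (sets as well-founded trees, with  *)
(* extensional equality given by bisimulation).                        *)
Inductive ZSet : Type := sup : forall (A : Type), (A -> ZSet) -> ZSet.

Definition zdom (x : ZSet) : Type := let: sup A _ := x in A.
Definition zelt (x : ZSet) : zdom x -> ZSet :=
  match x return zdom x -> ZSet with sup _ f => f end.

Fixpoint zeq (x y : ZSet) {struct x} : Prop :=
  match x with
  | sup A f => match y with
    | sup B g => (forall a, exists b, zeq (f a) (g b)) /\
                 (forall b, exists a, zeq (f a) (g b))
    end
  end.

Definition zin (w x : ZSet) : Prop := exists a : zdom x, zeq w (zelt a).

Definition zempty : ZSet := sup (fun e : Empty_set => match e with end).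

Definition zunion2 (x y : ZSet) : ZSet :=
  sup (fun c : zdom x + zdom y =>
         match c with inl a => zelt a | inr b => zelt b end).

Definition zbigunion (l : seq ZSet) : ZSet := foldr zunion2 zempty l.

Definition zfinite (x : ZSet) : Prop :=
  exists l : seq ZSet, forall w, zin w x <-> exists2 y, List.In y l & zeq w y.

Inductive zHF : ZSet -> Prop :=
  zHF_intro (x : ZSet) (l : seq ZSet) :
    (forall y, List.In y l -> zHF y) ->
    (forall w, zin w x <-> exists2 y, List.In y l & zeq w y) ->
    zHF x.

Inductive literal : Type :=
  | LUnion  of nat & nat & nat   (* x = y \cup z   *)
  | LDiff   of nat & nat & nat   (* x = y \ z      *)
  | LTensor of nat & nat & nat   (* x = y (x) z    *)
  | LNeq    of nat & nat.        (* x <> y         *)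

Definition bst_conj := seq literal.

Definition lit_vars (l : literal) : seq nat :=
  match l with
  | LUnion x y z | LDiff x y z | LTensor x y z => [:: x; y; z]
  | LNeq x y => [:: x; y]
  end.

Definition vars (phi : bst_conj) : seq nat := undup (flatten (map lit_vars phi)).

Definition zis_pair (w u v : ZSet) : Prop :=
  forall t, zin t w <-> (zeq t u \/ zeq t v).

Definition lit_sat (M : nat -> ZSet) (l : literal) : Prop :=
  match l with
  | LUnion x y z => zeq (M x) (zunion2 (M y) (M z))
  | LDiff x y z => forall w, zin w (M x) <-> (zin w (M y) /\ ~ zin w (M z))
  | LTensor x y z => forall w, zin w (M x) <->
        exists u v, [/\ zin u (M y), zin v (M z) & zis_pair w u v]
  | LNeq x y => ~ zeq (M x) (M y)
  end.

Definition satisfies (M : nat -> ZSet) (phi : bst_conj) : Prop :=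
  forall l, List.In l phi -> lit_sat M l.

Definition fin_satisfiable (phi : bst_conj) : Prop :=
  exists M : nat -> ZSet,
    satisfies M phi /\ zfinite (zbigunion (map M (vars phi))).

Definition hf_satisfiable (phi : bst_conj) : Prop :=
  exists M : nat -> ZSet,
    satisfies M phi /\ zHF (zbigunion (map M (vars phi))).

(* (x)-graphs: places form a finite type P; nodes are the nonempty     *)
(* subsets of P with at most two elements; T is the target map (its    *)
(* values on non-nodes are irrelevant).                                *)
Section TGraph.
Variables (P : finType) (T : {set P} -> {set P}).

Definition is_node (A : {set P}) : bool := (0 < #|A| <= 2)%N.

Definition is_tnode (A : {set P}) : bool := is_node A && (T A != set0).

Definition source_place (p : P) : Prop :=
  forall A, is_node A -> p \notin T A.

Definition accessible_place (p : P) : Prop :=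
  forall S : {set P},
    (forall q, source_place q -> q \in S) ->
    (forall A, is_node A -> A \subset S -> T A \subset S) ->
    p \in S.

Definition accessible_graph : Prop := forall p : P, accessible_place p.

Definition strict_total_order (lt : rel P) : Prop :=
  [/\ irreflexive lt, transitive lt & forall x y, x != y -> lt x y || lt y x].

Definition is_max (lt : rel P) (A : {set P}) (m : P) : Prop :=
  m \in A /\ forall a, a \in A -> a != m -> lt a m.

Definition topological_order (lt : rel P) : Prop :=
  strict_total_order lt /\
  forall A, is_tnode A -> forall m1 m2,
    is_max lt A m1 -> is_max lt (T A) m2 -> lt m1 m2.

Definition has_topological_order : Prop := exists lt, topological_order lt.

Definition in_tens (s t A : {set P}) : bool :=
  [exists u in s, exists v in t, A == [set u; v]].

Definition lit_fulfilled (F : nat -> {set P}) (l : literal) : Prop :=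
  match l with
  | LUnion x y z => F x = F y :|: F z
  | LDiff x y z => F x = F y :\: F z
  | LNeq x y => F x <> F y
  | LTensor x y z =>
      [/\ forall u v, u \in F y -> v \in F z ->
             T [set u; v] != set0 /\ T [set u; v] \subset F x,
          F x \subset \bigcup_(A | is_node A && in_tens (F y) (F z) A) T A
        & (\bigcup_(A | is_node A && ~~ in_tens (F y) (F z) A) T A) :&: F x
            = set0]
  end.

Definition fulfilling (phi : bst_conj) (F : nat -> {set P}) : Prop :=
  forall l, List.In l phi -> lit_fulfilled F l.

Definition fulfills (phi : bst_conj) : Prop := exists F, fulfilling phi F.

End TGraph.

From Stdlib Require Import Classical ClassicalEpsilon.
From Stdlib Require PeanoNat.
From mathcomp Require Import all_boot zify.
Set Implicit Arguments. Unset Strict Implicit. Unset Printing Implicit Defensive.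

(* The theorem is the cycle of implications
     finite model  ->  small accessible (x)-graph with a topological order
                   ->  hereditarily finite model  ->  finite model.

   After generic facts on lists, finite sets, extensional equality of sets,
   hereditarily finite sets and Ackermann's coding of them by numbers:
   - Section FiniteModelToGraph: from a finite model M we take as places the
     nonempty Venn regions of the values of the variables met by elements of
     the universe (at most 2^n - 1 of them); the targets of a node {p, q} are
     the regions of the pairs {u, v}, u in p, v in q, of operands of tensor
     literals.  Accessibility follows by membership induction, and ordering
     places by the membership-height of their elements is topological.
   - Section GraphToModel: from a graph we build sets as terms, namely atoms
     (tagged copies of elements of source places) and pairs.  Every place r
     receives "core" terms, built along the accessibility levels from cores of
     a node of which r is a target; any other pair over a tensor node goes to
     the topmost target of that node.  The topological order bounds the depth
     of the valid terms, so they form a finite universe, and Ackermann's coding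
     turns them into hereditarily finite sets.
   - Hereditarily finite sets are in particular finite. *)

Definition asbool (P : Prop) : bool :=
  if excluded_middle_informative P then true else false.

Lemma asboolP (P : Prop) : reflect P (asbool P).
Proof. by rewrite /asbool; case: excluded_middle_informative => H; constructor. Qed.

(* Facts about Stdlib's [List.In] on sequences, needed for lists of sets
   (which have no decidable equality); first, it agrees with boolean
   membership. *)
Lemma InE (T : eqType) (x : T) s : List.In x s <-> x \in s.
Proof.
elim: s => [|y s IH] //=; rewrite in_cons; split.
- by case=> [->|/IH ->]; rewrite ?eqxx ?orbT.
- by case/orP=> [/eqP->|/IH]; auto.
Qed.

Lemma In_filter (T : Type) (p : pred T) x s :
  List.In x (filter p s) <-> List.In x s /\ p x.
Proof.
elim: s => [|y s IH] /=; first by split=> [|[]].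
case Py: (p y) => /=; rewrite ?IH; split.
- by case=> [<-|[]]; auto.
- by case=> [[<-|H] Hx]; auto.
- by case=> H Hx; auto.
- by case=> [[E|H] Hx]; [subst; rewrite Py in Hx | auto].
Qed.

Lemma In_allpairs (T1 T2 T3 : Type) (f : T1 -> T2 -> T3) s t a b :
  List.In a s -> List.In b t -> List.In (f a b) [seq f x y | x <- s, y <- t].
Proof.
elim: s => [|x s IH] //= [<-|Ha] Hb; apply/List.in_app_iff.
- by left; apply: List.in_map.
- by right; apply: IH.
Qed.

Lemma mem_map_In (T : Type) (U : eqType) (f : T -> U) (l : seq T) V :
  V \in map f l <-> exists2 y, List.In y l & V = f y.
Proof.
elim: l => [|y l IH] /=; first by split=> [|[]].
rewrite in_cons; split=> [/orP[/eqP->|/IH[y' H1 H2]]|[y' [<-|H1] E]].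
- by exists y; auto.
- by exists y'; auto.
- by rewrite E eqxx.
- by apply/orP; right; apply/IH; exists y'.
Qed.

Lemma In_nth (T : Type) (x0 y : T) (l : seq T) :
  List.In y l -> exists i : 'I_(size l), nth x0 l i = y.
Proof.
elim: l => [|z l IH] //= [<-|/IH [i Hi]]; first by exists ord0.
by exists (lift ord0 i).
Qed.

Lemma set2_eq (T : finType) (a b c d : T) : [set a; b] = [set c; d] ->
  (a = c /\ b = d) \/ (a = d /\ b = c).
Proof.
move=> E.
have Ha : a \in [set c; d] by rewrite -E !inE eqxx.
have Hb : b \in [set c; d] by rewrite -E !inE eqxx orbT.
have Hc : c \in [set a; b] by rewrite E !inE eqxx.
have Hd : d \in [set a; b] by rewrite E !inE eqxx orbT.
move: Ha Hb Hc Hd; rewrite !inE.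
by move=> /orP[/eqP?|/eqP?] /orP[/eqP?|/eqP?] /orP[/eqP?|/eqP?] /orP[/eqP?|/eqP?];
  subst; auto.
Qed.

Lemma setU2C (T : finType) (a b : T) : [set a; b] = [set b; a].
Proof. by apply/setP => x; rewrite !inE orbC. Qed.

Lemma is_node2 (T : finType) (a b : T) : is_node [set a; b].
Proof. by rewrite /is_node cards2; case: (a != b). Qed.

Lemma nodeP (T : finType) (A : {set T}) : is_node A -> exists a b, A = [set a; b].
Proof.
rewrite /is_node => /andP [H1 H2].
have /orP[/cards1P [x ->]|/cards2P [x [y [_ ->]]]] : (#|A| == 1) || (#|A| == 2) by lia.
- by exists x, x; rewrite setUid.
- by exists x, y.
Qed.

Lemma in_tens2 (T : finType) (s t : {set T}) a b :
  a \in s -> b \in t -> in_tens s t [set a; b].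
Proof.
by move=> Ha Hb; apply/existsP; exists a; rewrite Ha; apply/existsP; exists b; rewrite Hb /=.
Qed.

Lemma zeq_refl x : zeq x x.
Proof. elim: x => A f IH /=; split => a; exists a; exact: IH. Qed.

Lemma zeq_sym x y : zeq x y -> zeq y x.
Proof.
elim: x y => A f IH [B g] /= [H1 H2]; split.
- by move=> b; case: (H2 b) => a Ha; exists a; apply: IH.
- by move=> a; case: (H1 a) => b Hb; exists b; apply: IH.
Qed.

Lemma zeq_trans x y z : zeq x y -> zeq y z -> zeq x z.
Proof.
elim: x y z => A f IH [B g] [C h] /= [H1 H2] [H3 H4]; split.
- move=> a; case: (H1 a) => b Hb; case: (H3 b) => c Hc; exists c; exact: IH Hb Hc.
- move=> c; case: (H4 c) => b Hb; case: (H2 b) => a Ha; exists a; exact: IH Ha Hb.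
Qed.

Lemma zin_eql w w' x : zeq w w' -> zin w x -> zin w' x.
Proof. by move=> H [a Ha]; exists a; apply: zeq_trans (zeq_sym H) Ha. Qed.

Lemma zin_eqr w x x' : zeq x x' -> zin w x -> zin w x'.
Proof.
case: x => A f; case: x' => B g /= [H1 _] [a Ha].
by case: (H1 a) => b Hb; exists b; apply: zeq_trans Ha Hb.
Qed.

Lemma zextP x y : zeq x y <-> forall w, zin w x <-> zin w y.
Proof.
split=> [H w|]; first by split; apply: zin_eqr; [|apply: zeq_sym].
case: x => A f; case: y => B g H /=; split.
- by move=> a; case: (proj1 (H (f a)) (ex_intro _ a (zeq_refl _))) => b; exists b.
- move=> b; case: (proj2 (H (g b)) (ex_intro _ b (zeq_refl _))) => a Ha.
  by exists a; apply: zeq_sym.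
Qed.

Lemma zin_empty w : ~ zin w zempty.
Proof. by case=> [[]]. Qed.

Lemma zin_union2 w x y : zin w (zunion2 x y) <-> zin w x \/ zin w y.
Proof.
case: x => A f; case: y => B g; split.
- by case=> [[a|b] H]; [left; exists a | right; exists b].
- by case=> [[a H]|[b H]]; [exists (inl a) | exists (inr b)].
Qed.

Lemma zin_bigunion w l : zin w (zbigunion l) <-> exists2 y, List.In y l & zin w y.
Proof.
elim: l => [|y l IH] /=; first by split=> [/zin_empty|[]].
rewrite zin_union2 IH; split.
- by case=> [H|[y' H1 H2]]; [exists y; auto | exists y'; auto].
- by case=> y' [<-|H1] H2; [left | right; exists y'].
Qed.

Fixpoint zlist (s : seq ZSet) : ZSet :=
  if s is y :: s' then zunion2 (sup (fun _ : unit => y)) (zlist s') else zempty.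

Lemma zin_zlist w s : zin w (zlist s) <-> exists2 y, List.In y s & zeq w y.
Proof.
elim: s => [|y s IH] /=; first by split=> [/zin_empty|[]].
rewrite zin_union2 IH; split.
- by case=> [[u H]|[y' H1 H2]]; [exists y; auto | exists y'; auto].
- by case=> y' [<-|H1] H2; [left; exists tt | right; exists y'].
Qed.

Definition zpair u v := sup (fun b : bool => if b then u else v).

Lemma zpairP u v : zis_pair (zpair u v) u v.
Proof.
move=> t; split; first by case=> [[]] H; auto.
by case=> H; [exists true | exists false].
Qed.

Lemma zis_pair_sym w u v : zis_pair w u v -> zis_pair w v u.
Proof. by move=> H t; rewrite H; tauto. Qed.

Lemma zis_pair_eq w w' u v : zis_pair w u v -> zis_pair w' u v -> zeq w w'.
Proof. by move=> H H'; apply/zextP => t; rewrite H H'. Qed.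

Lemma zis_pair_resp w w' u u' v v' :
  zeq w w' -> zeq u u' -> zeq v v' -> zis_pair w u v -> zis_pair w' u' v'.
Proof.
move=> Hw Hu Hv H t; split => Ht.
- case/H: (zin_eqr (zeq_sym Hw) Ht) => E; [left|right]; exact: zeq_trans E _.
- apply: zin_eqr Hw _; apply/H.
  by case: Ht => E; [left|right]; apply: zeq_trans E (zeq_sym _).
Qed.

Lemma zis_pair_inj w u v u' v' : zis_pair w u v -> zis_pair w u' v' ->
  (zeq u u' /\ zeq v v') \/ (zeq u v' /\ zeq v u').
Proof.
move=> H H'.
have Eu : zeq u u' \/ zeq u v' by apply/H'/H; left; apply: zeq_refl.
have Ev : zeq v u' \/ zeq v v' by apply/H'/H; right; apply: zeq_refl.
have Eu' : zeq u' u \/ zeq u' v by apply/H/H'; left; apply: zeq_refl.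
have Ev' : zeq v' u \/ zeq v' v by apply/H/H'; right; apply: zeq_refl.
case: Eu Ev => Eu [] Ev; try by [left|right].
- case: Ev' => Ev'; last by left; split=> //; apply: zeq_sym.
  by left; split=> //; apply: zeq_trans (zeq_trans Ev (zeq_sym Eu)) (zeq_sym Ev').
- case: Eu' => Eu'; first by left; split=> //; apply: zeq_sym.
  by left; split=> //; apply: zeq_trans (zeq_trans Eu (zeq_sym Ev)) (zeq_sym Eu').
Qed.



Lemma zHF_finite x : zHF x -> zfinite x.
Proof. by case=> {}x l _ E; exists l. Qed.

Lemma zHF_empty : zHF zempty.
Proof. by apply: (zHF_intro (l := [::])) => // w; split=> [/zin_empty|[]]. Qed.

Lemma zHF_union x y : zHF x -> zHF y -> zHF (zunion2 x y).
Proof.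
case=> {}x lx Hx Ex; case=> {}y ly Hy Ey.
apply: (zHF_intro (l := lx ++ ly)) => [z /List.in_app_iff [] ?|w]; auto.
rewrite zin_union2 Ex Ey; split.
- by case=> -[z H1 H2]; exists z => //; apply/List.in_app_iff; auto.
- by case=> z /List.in_app_iff [] H1 H2; [left|right]; exists z.
Qed.

Lemma zHF_single y : zHF y -> zHF (sup (fun _ : unit => y)).
Proof.
move=> H; apply: (zHF_intro (l := [:: y])) => [z [<-|[]] //|w].
by split=> [[u E]|[z [<-|[]] E]]; [exists y; first left | exists tt].
Qed.

Lemma zHF_zlist s : (forall y, List.In y s -> zHF y) -> zHF (zlist s).
Proof.
elim: s => [|y s IH] H /=; first exact: zHF_empty.
apply: zHF_union; first by apply: zHF_single; apply: H; left.
by apply: IH => z Hz; apply: H; right.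
Qed.

Lemma zHF_bigunion l : (forall y, List.In y l -> zHF y) -> zHF (zbigunion l).
Proof.
elim: l => [|y l IH] H /=; first exact: zHF_empty.
by apply: zHF_union; [apply: H; left | apply: IH => z Hz; apply: H; right].
Qed.

Lemma testbit_lt n i : Nat.testbit n i -> i < n.
Proof.
case: n => [|n] H; first by rewrite PeanoNat.Nat.bits_0 in H.
have H1 := PeanoNat.Nat.log2_lt_lin n.+1 (PeanoNat.Nat.lt_0_succ n).
have : ~ (Nat.log2 n.+1 < i)%coq_nat.
  by move=> /PeanoNat.Nat.bits_above_log2 E; rewrite E in H.
by move=> H2; apply/ltP; lia.
Qed.

(* Ackermann's coding of hereditarily finite sets by natural numbers:
   [ack n] has the elements [ack i] for the bits [i] of [n] (all smaller
   than [n]); [ackf k n] computes it with fuel [k > n]. *)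
Fixpoint ackf (k n : nat) : ZSet :=
  if k is k'.+1 then
    sup (fun i : {i : 'I_n | Nat.testbit n i} => ackf k' (sval i))
  else zempty.

Definition ack n := ackf n.+1 n.

Lemma ackf_eq k k' n : n < k -> n < k' -> zeq (ackf k n) (ackf k' n).
Proof.
elim: k k' n => [|k IH] [|k'] n //= Hk Hk'.
by split=> -[i Hi]; exists (exist _ i Hi); apply: IH; have := ltn_ord i; simpl in *; lia.
Qed.

Lemma zin_ack w n : zin w (ack n) <-> exists2 i, Nat.testbit n i & zeq w (ack i).
Proof.
split=> [[[i Hi] H]|[i Hi H]].
- by exists (nat_of_ord i) => //; apply: zeq_trans H _; apply: ackf_eq.
- have Hl := testbit_lt Hi; exists (exist _ (Ordinal Hl) Hi).
  by apply: zeq_trans H _; apply: ackf_eq => /=; lia.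
Qed.

Lemma ack_inj a b : zeq (ack a) (ack b) -> a = b.
Proof.
move: {2}(a + b).+1 (ltnSn (a + b)) => m; elim: m a b => [|m IH] a b // Hm E.
have bits_incl c d : c + d < m.+1 -> zeq (ack c) (ack d) ->
    forall i, Nat.testbit c i -> Nat.testbit d i.
  move=> Hcd Ecd i Hi; have : zin (ack i) (ack d).
    by apply: zin_eqr Ecd _; apply/zin_ack; exists i => //; apply: zeq_refl.
  case/zin_ack => j Hj /IH -> //.
  by have := testbit_lt Hi; have := testbit_lt Hj; lia.
have Hab := bits_incl a b Hm E.
have Hm' : b + a < m.+1 by rewrite addnC.
have Hba := bits_incl b a Hm' (zeq_sym E).
by apply: PeanoNat.Nat.bits_inj => i; apply/idP/idP; [apply: Hab | apply: Hba].
Qed.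

Lemma zHF_ack n : zHF (ack n).
Proof.
move: {2}n.+1 (ltnSn n) => m; elim: m n => [|m IH] n // Hn.
apply: (zHF_intro (l := map ack [seq i <- iota 0 n | Nat.testbit n i])).
- move=> y /List.in_map_iff [i [<- /In_filter [_ Hi]]].
  by apply: IH; have := testbit_lt Hi; lia.
- move=> w; rewrite zin_ack; split.
  + case=> i Hi E; exists (ack i) => //; apply/List.in_map_iff; exists i; split=> //.
    by apply/In_filter; split=> //; apply/InE; rewrite mem_iota /= add0n (testbit_lt Hi).
  + by case=> y /List.in_map_iff [i [<- /In_filter [_ Hi]]] E; exists i.
Qed.

Definition pair_code x y := PeanoNat.Nat.setbit (PeanoNat.Nat.setbit 0 x) y.

Lemma nat_eqbE m n : Nat.eqb m n = (m == n).
Proof. by apply/idP/eqP => [/PeanoNat.Nat.eqb_eq|->] //; apply: PeanoNat.Nat.eqb_refl. Qed.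

Lemma testbit_pair_code x y m : Nat.testbit (pair_code x y) m = (m == x) || (m == y).
Proof.
rewrite /pair_code !PeanoNat.Nat.setbit_eqb PeanoNat.Nat.bits_0 !nat_eqbE orbF orbC.
by rewrite (eq_sym x) (eq_sym y).
Qed.

Lemma zis_pair_ack x y : zis_pair (ack (pair_code x y)) (ack x) (ack y).
Proof.
move=> t; rewrite zin_ack; split.
- by case=> i; rewrite testbit_pair_code => /orP [] /eqP -> E; [left|right].
- by case=> E; [exists x | exists y]; rewrite ?testbit_pair_code ?eqxx ?orbT.
Qed.

Section FiniteModelToGraph.
Variables (phi : bst_conj) (M : nat -> ZSet) (l : seq ZSet).

Local Notation vs := (vars phi).
Local Notation n := (size (vars phi)).
Local Notation U := (zbigunion (map M (vars phi))).

Hypothesis M_sat : satisfies M phi.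
Hypothesis U_list : forall w, zin w U <-> exists2 y, List.In y l & zeq w y.

Lemma mem_U w : zin w U <-> exists2 v, v \in vs & zin w (M v).
Proof.
rewrite zin_bigunion; split.
- by case=> y /List.in_map_iff [v [<- /InE Hv]] H; exists v.
- by case=> v /InE Hv H; exists (M v) => //; apply/List.in_map_iff; exists v.
Qed.

Lemma mem_U_of w v : v \in vs -> zin w (M v) -> zin w U.
Proof. by move=> Hv H; apply/mem_U; exists v. Qed.

Lemma lit_vars_phi lit x : List.In lit phi -> x \in lit_vars lit -> x \in vs.
Proof.
move=> Hlit Hx; rewrite mem_undup; apply/flattenP; exists (lit_vars lit) => //.
by apply/mem_map_In; exists lit.
Qed.

Lemma tensor_vars x y z : List.In (LTensor x y z) phi ->
  [/\ x \in vs, y \in vs & z \in vs].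
Proof. by move=> H; split; apply: (lit_vars_phi H); rewrite !inE eqxx ?orbT. Qed.

Definition venn (w : ZSet) : {set 'I_n} :=
  [set i : 'I_n | asbool (zin w (M (nth 0 vs i)))].

Lemma venn_zeq w w' : zeq w w' -> venn w = venn w'.
Proof.
move=> E; apply/setP => i; rewrite !inE.
by apply/asboolP/asboolP; apply: zin_eql; last apply: zeq_sym.
Qed.

Definition Place : finType := {V : {set 'I_n} | V \in map venn l}.

Definition lies_in (w : ZSet) (p : Place) : Prop := zin w U /\ venn w = val p.

Lemma lies_in_exists w : zin w U -> exists p : Place, lies_in w p.
Proof.
move=> Hw; case/U_list: (Hw) => y Hy E.
have Hm : venn w \in map venn l by apply/mem_map_In; exists y; rewrite ?(venn_zeq E).
by exists (exist _ (venn w) Hm).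
Qed.

Lemma lies_in_uniq w p q : lies_in w p -> lies_in w q -> p = q.
Proof. by move=> [_ E1] [_ E2]; apply: val_inj; rewrite -E1 -E2. Qed.

Lemma lies_in_zeq w w' p : zeq w w' -> lies_in w p -> lies_in w' p.
Proof. by move=> E [Hw Es]; split; [apply: zin_eql E Hw | rewrite -(venn_zeq E)]. Qed.

Lemma place_inhabited (p : Place) : exists w, lies_in w p.
Proof.
case: p => V HV; case/mem_map_In: (HV) => y Hy E; exists y; split=> //.
by apply/U_list; exists y => //; apply: zeq_refl.
Qed.

Definition place_set (v : nat) : {set Place} :=
  [set p : Place | [exists i : 'I_n, (nth 0 vs i == v) && (i \in val p)]].

Lemma lies_in_M w p v : v \in vs -> lies_in w p -> (zin w (M v) <-> p \in place_set v).
Proof.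
move=> Hv [_ E]; rewrite inE; split.
- move=> H; apply/existsP; have Hi : index v vs < n by rewrite index_mem.
  exists (Ordinal Hi); rewrite /= nth_index // eqxx /= -E inE.
  by apply/asboolP; rewrite nth_index.
- by case/existsP => i /andP [/eqP Ei]; rewrite -E inE Ei => /asboolP.
Qed.

Inductive pair_witness (A : {set Place}) (r : Place) : Prop :=
  PairWitness x y z u v pu pv of List.In (LTensor x y z) phi
    & zin u (M y) & zin v (M z) & lies_in u pu & lies_in v pv
    & A = [set pu; pv] & lies_in (zpair u v) r.

Definition targets (A : {set Place}) : {set Place} :=
  [set r | asbool (pair_witness A r)].

Lemma tensor_pair x y z u v : List.In (LTensor x y z) phi ->
  zin u (M y) -> zin v (M z) -> zin (zpair u v) (M x).
Proof. by move=> Hlit Hu Hv; apply/(M_sat Hlit); exists u, v; split=> //; apply: zpairP. Qed.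

Lemma pair_in_targets x y z u v pu pv : List.In (LTensor x y z) phi ->
  zin u (M y) -> zin v (M z) -> lies_in u pu -> lies_in v pv ->
  exists2 r, lies_in (zpair u v) r & r \in targets [set pu; pv].
Proof.
move=> Hlit Hu Hv Hpu Hpv; have [Hx _ _] := tensor_vars Hlit.
case: (lies_in_exists (mem_U_of Hx (tensor_pair Hlit Hu Hv))) => r Hr; exists r => //.
by rewrite inE; apply/asboolP; apply: (PairWitness Hlit Hu Hv Hpu Hpv).
Qed.

(* Every place is accessible, by induction on membership: an element of some
   tensor variable is a pair of smaller elements, and an element of no tensor
   variable lies in a source place. *)
Lemma targets_accessible : accessible_graph targets.
Proof.
move=> p S Hsrc Hcl; suff H w q : lies_in w q -> q \in S.
  by case: (place_inhabited p) => w /H.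
elim: w q => A f IH q Hq.
case: (classic (exists x y z, List.In (LTensor x y z) phi /\ zin (sup f) (M x))).
- case=> x [y [z [Hlit /(M_sat Hlit) [u [v [Hu Hv Hp]]]]]].
  have [_ Hy Hz] := tensor_vars Hlit.
  have in_S t pt : zin t (sup f) -> lies_in t pt -> pt \in S.
    by case=> a Ha Hpt; apply: (IH a); apply: lies_in_zeq Ha Hpt.
  case: (lies_in_exists (mem_U_of Hy Hu)) => pu Hpu.
  case: (lies_in_exists (mem_U_of Hz Hv)) => pv Hpv.
  have Hsub : [set pu; pv] \subset S.
    apply/subsetP => t; rewrite !inE => /orP [] /eqP ->.
    + by apply: in_S Hpu; apply/Hp; left; apply: zeq_refl.
    + by apply: in_S Hpv; apply/Hp; right; apply: zeq_refl.
  case: (pair_in_targets Hlit Hu Hv Hpu Hpv) => r Hr Htr.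
  have -> : q = r.
    by apply: lies_in_uniq Hq (lies_in_zeq _ Hr); apply: zis_pair_eq (zpairP _ _) Hp.
  exact: (subsetP (Hcl _ (is_node2 pu pv) Hsub)).
- move=> Hno; apply: Hsrc => B _; apply/negP; rewrite inE => /asboolP.
  case=> x y z u v pu pv Hlit Hu Hv _ _ _ Hr; apply: Hno; exists x, y, z; split=> //.
  have [Hx _ _] := tensor_vars Hlit.
  by apply/(lies_in_M Hx Hq)/(lies_in_M Hx Hr); apply: tensor_pair Hlit Hu Hv.
Qed.

Fixpoint ranked (k : nat) (w : ZSet) : Prop :=
  if k is k'.+1 then forall y, zin y U -> zin y w -> ranked k' y else False.

Lemma ranked_zeq k w w' : zeq w w' -> ranked k w -> ranked k w'.
Proof. by case: k => [|k] //= E H y Hy /(zin_eqr (zeq_sym E)); apply: H. Qed.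

Lemma ranked_le k k' w : k <= k' -> ranked k w -> ranked k' w.
Proof.
elim: k k' w => [|k IH] [|k'] w //= Hk H y Hy Hyw.
by apply: IH Hk _; apply: H.
Qed.

(* Since U has finitely many elements, every set is ranked. *)
Lemma ranked_exists w : exists k, ranked k w.
Proof.
elim: w => A f IH.
suff [k Hk] : exists k, forall y, List.In y l -> zin y (sup f) -> ranked k y.
  exists k.+1 => y /U_list [y' Hy' E] Hyw.
  by apply: ranked_zeq (zeq_sym E) _; apply: Hk Hy' _; apply: zin_eql E Hyw.
elim: l => [|y0 l' [k Hk]]; first by exists 0.
case: (classic (zin y0 (sup f))) => [[a Ha]|H0]; last first.
  by exists k => y [<-|Hy] Hyf; [|apply: Hk].
case: (IH a) => k0 Hk0; exists (maxn k k0) => y [<-|Hy] Hyf.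
- by apply: ranked_le (leq_maxr _ _) _; apply: ranked_zeq (zeq_sym Ha) Hk0.
- by apply: ranked_le (leq_maxl _ _) _; apply: Hk.
Qed.

Lemma ranked_existsb w : exists k, asbool (ranked k w).
Proof. by case: (ranked_exists w) => k Hk; exists k; apply/asboolP. Qed.

Definition height (w : ZSet) : nat := ex_minn (ranked_existsb w).

Lemma height_lt u w : zin u U -> zin u w -> height u < height w.
Proof.
move=> HuU Huw; rewrite /height.
case: (ex_minnP (ranked_existsb w)) => -[|k] /asboolP //= Hk _.
by case: ex_minnP => k' _; apply; apply/asboolP; apply: Hk.
Qed.

Lemma height_zeq w w' : zeq w w' -> height w = height w'.
Proof.
have le w1 w2 : zeq w1 w2 -> height w1 <= height w2.
  move=> E; rewrite /height; case: (ex_minnP (ranked_existsb w2)) => k /asboolP Hk _.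
  case: ex_minnP => k' _; apply.
  by apply/asboolP; apply: ranked_zeq (zeq_sym E) Hk.
by move=> E; apply/eqP; rewrite eqn_leq !le //; apply: zeq_sym.
Qed.

Local Notation rep i := (nth zempty l i).

Definition place_height (p : Place) : nat :=
  \max_(i < size l | asbool (lies_in (rep i) p)) height (rep i).

Lemma rep_of w : zin w U -> exists i : 'I_(size l), zeq w (rep i).
Proof. by case/U_list => y /(In_nth zempty) [i <-] E; exists i. Qed.

Lemma place_height_ge w p : lies_in w p -> height w <= place_height p.
Proof.
move=> Hw; case: (rep_of (proj1 Hw)) => i E; rewrite (height_zeq E).
by apply: leq_bigmax_cond; apply/asboolP; apply: lies_in_zeq E Hw.
Qed.

Lemma place_height_attained p : exists2 w, lies_in w p & height w = place_height p.
Proof.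
case: (place_inhabited p) => w Hw; case: (rep_of (proj1 Hw)) => i E.
have Hi : 0 < #|fun i : 'I_(size l) => asbool (lies_in (rep i) p)|.
  by apply/card_gt0P; exists i; rewrite unfold_in; apply/asboolP; apply: lies_in_zeq E Hw.
case: (eq_bigmax_cond (fun i : 'I_(size l) => height (rep i)) Hi) => j.
by rewrite unfold_in => /asboolP Hj Ej; exists (rep j).
Qed.

Definition place_lt : rel Place := fun p q =>
  (place_height p < place_height q) ||
  ((place_height p == place_height q) && (enum_rank p < enum_rank q)).

Lemma place_lt_total : strict_total_order place_lt.
Proof.
split.
- by move=> p; rewrite /place_lt ltnn eqxx ltnn.
- by move=> b a c; rewrite /place_lt; lia.
- move=> p q Hpq; rewrite /place_lt.
  have : nat_of_ord (enum_rank p) != enum_rank q.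
    by apply: contra Hpq => /eqP /val_inj /enum_rank_inj ->.
  lia.
Qed.

Lemma target_above A p : is_tnode targets A -> p \in A ->
  exists2 r, r \in targets A & place_height p < place_height r.
Proof.
case/andP => _ /set0Pn [r0]; rewrite inE => /asboolP.
case=> x y z u v pu pv Hlit Hu Hv Hpu Hpv -> _.
have [_ Hy Hz] := tensor_vars Hlit.
case: (place_height_attained p) => w Hwp <-.
rewrite !inE => /orP [] /eqP Ep; subst p.
- have Hw : zin w (M y) by apply/(lies_in_M Hy Hwp)/(lies_in_M Hy Hpu).
  case: (pair_in_targets Hlit Hw Hv Hwp Hpv) => r Hr Htr; exists r => //.
  apply: leq_trans (place_height_ge Hr); apply: height_lt (mem_U_of Hy Hw) _.
  by apply/zpairP; left; apply: zeq_refl.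
- have Hw : zin w (M z) by apply/(lies_in_M Hz Hwp)/(lies_in_M Hz Hpv).
  case: (pair_in_targets Hlit Hu Hw Hpu Hwp) => r Hr Htr; exists r => //.
  apply: leq_trans (place_height_ge Hr); apply: height_lt (mem_U_of Hz Hw) _.
  by apply/zpairP; right; apply: zeq_refl.
Qed.

(* The maximum of a tensor node lies below one of its targets, hence below
   their maximum: [place_lt] is a topological order. *)
Lemma place_lt_topological : topological_order targets place_lt.
Proof.
split=> [|A HA m1 m2 [Hm1 _] [Hm2 Hmax]]; first exact: place_lt_total.
case: (target_above HA Hm1) => r Hr Hlt; rewrite /place_lt.
suff Hle : place_height r <= place_height m2 by rewrite (leq_trans Hlt Hle).
case: (eqVneq r m2) => [->//|Hne]; move: (Hmax r Hr Hne); rewrite /place_lt; lia.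
Qed.

Lemma place_set_eqP x (S : {set Place}) : x \in vs ->
  (forall w p, lies_in w p -> (zin w (M x) <-> p \in S)) -> place_set x = S.
Proof.
move=> Hx H; apply/setP => p; case: (place_inhabited p) => w Hw.
by apply/idP/idP => [/(lies_in_M Hx Hw)/(H _ _ Hw)|/(H _ _ Hw)/(lies_in_M Hx Hw)].
Qed.

Lemma place_set_zeq x y : x \in vs -> y \in vs -> place_set x = place_set y ->
  zeq (M x) (M y).
Proof.
move=> Hx Hy E; apply/zextP => w; split=> Hw.
- have [p Hp] := lies_in_exists (mem_U_of Hx Hw).
  by apply/(lies_in_M Hy Hp); rewrite -E; apply/(lies_in_M Hx Hp).
- have [p Hp] := lies_in_exists (mem_U_of Hy Hw).
  by apply/(lies_in_M Hx Hp); rewrite E; apply/(lies_in_M Hy Hp).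
Qed.

Lemma targets_within x y z : List.In (LTensor x y z) phi -> forall p q,
  p \in place_set y -> q \in place_set z ->
  targets [set p; q] != set0 /\ targets [set p; q] \subset place_set x.
Proof.
move=> Hlit p q Hp Hq; have [Hx Hy Hz] := tensor_vars Hlit.
have [u Hu] := place_inhabited p; have [v Hv] := place_inhabited q.
have Huy : zin u (M y) by apply/(lies_in_M Hy Hu).
have Hvz : zin v (M z) by apply/(lies_in_M Hz Hv).
split; first by case: (pair_in_targets Hlit Huy Hvz Hu Hv) => r _ Hr; apply/set0Pn; exists r.
apply/subsetP => r; rewrite inE => /asboolP [x' y' z' u' v' pu pv _ _ _ Hpu Hpv EA Hr].
apply/(lies_in_M Hx Hr)/(M_sat Hlit).
case: (set2_eq EA) => -[E1 E2]; subst.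
- by exists u', v'; split; [apply/(lies_in_M Hy Hpu)|apply/(lies_in_M Hz Hpv)|apply: zpairP].
- exists v', u'; split; [apply/(lies_in_M Hy Hpv)|apply/(lies_in_M Hz Hpu)|] => //.
  by apply: zis_pair_sym; apply: zpairP.
Qed.

Lemma tensor_covered x y z : List.In (LTensor x y z) phi ->
  place_set x \subset
    \bigcup_(A | is_node A && in_tens (place_set y) (place_set z) A) targets A.
Proof.
move=> Hlit; have [Hx Hy Hz] := tensor_vars Hlit.
apply/subsetP => r Hr; case: (place_inhabited r) => w Hw.
case/(M_sat Hlit): ((lies_in_M Hx Hw).2 Hr) => u [v [Hu Hv Hp]].
have [pu Hpu] := lies_in_exists (mem_U_of Hy Hu).
have [pv Hpv] := lies_in_exists (mem_U_of Hz Hv).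
apply: (subsetP (bigcup_sup [set pu; pv] _)).
- by rewrite is_node2 in_tens2 //; [apply/(lies_in_M Hy Hpu) | apply/(lies_in_M Hz Hpv)].
- rewrite inE; apply/asboolP; apply: (PairWitness Hlit Hu Hv Hpu Hpv erefl).
  by apply: lies_in_zeq Hw; apply: zis_pair_eq Hp (zpairP _ _).
Qed.

(* Condition (c3): a place of [x] is a target only of pairs over [y] and [z],
   since a pair determines its components. *)
Lemma targets_outside x y z : List.In (LTensor x y z) phi ->
  (\bigcup_(A | is_node A && ~~ in_tens (place_set y) (place_set z) A) targets A)
    :&: place_set x = set0.
Proof.
move=> Hlit; have [Hx Hy Hz] := tensor_vars Hlit.
apply/setP => r; rewrite in_setI in_set0; apply/negP.
case/andP => /bigcupP [A /andP [_ /negP Hnt]]; rewrite inE => /asboolP.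
case=> x' y' z' u' v' pu pv _ _ _ Hpu Hpv EA Hr /(lies_in_M Hx Hr) /(M_sat Hlit).
case=> u [v [Hu Hv Hp]]; apply: Hnt; rewrite EA.
case: (zis_pair_inj Hp (zpairP u' v')) => -[E1 E2].
- by apply: in_tens2; [apply/(lies_in_M Hy (lies_in_zeq (zeq_sym E1) Hpu))
                      | apply/(lies_in_M Hz (lies_in_zeq (zeq_sym E2) Hpv))].
- by rewrite setU2C; apply: in_tens2; [apply/(lies_in_M Hy (lies_in_zeq (zeq_sym E1) Hpv))
                                     | apply/(lies_in_M Hz (lies_in_zeq (zeq_sym E2) Hpu))].
Qed.

Lemma place_set_fulfilling : fulfilling targets phi place_set.
Proof.
move=> lit Hlit; have Hvs x := @lit_vars_phi lit x Hlit; have Hs := M_sat Hlit.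
case: lit Hlit Hvs Hs => [x y z|x y z|x y z|x y] Hlit Hvs /= Hs; last 2 first.
- by split; [apply: targets_within | apply: tensor_covered | apply: targets_outside].
- by move=> E; apply: Hs; apply: place_set_zeq E; apply: Hvs; rewrite !inE eqxx ?orbT.
all: have Hx : x \in vs by apply: Hvs; rewrite !inE eqxx.
all: have Hy : y \in vs by apply: Hvs; rewrite !inE eqxx ?orbT.
all: have Hz : z \in vs by apply: Hvs; rewrite !inE eqxx ?orbT.
all: apply: place_set_eqP => // w p Hw.
- rewrite in_setU -(rwP orP) -(lies_in_M Hy Hw) -(lies_in_M Hz Hw) -zin_union2.
  exact: (zextP _ _).1 Hs w.
- rewrite in_setD andbC -(rwP andP) -(rwP negP) -(lies_in_M Hy Hw) -(lies_in_M Hz Hw).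
  exact: Hs w.
Qed.

(* Places are nonempty Venn regions over the n variables. *)
Lemma card_Place : #|Place| <= 2 ^ n - 1.
Proof.
have -> : 2 ^ n - 1 = #|powerset [set: 'I_n] :\ set0|.
  have := cardsD1 set0 (powerset [set: 'I_n]).
  by rewrite card_powerset cardsT card_ord powersetE sub0set => ->; rewrite add1n subn1.
rewrite card_sig; apply: subset_leq_card; apply/subsetP => V.
rewrite !inE subsetT andbT => /mem_map_In [y Hy ->]; apply/set0Pn.
have /mem_U [v Hv Hyv] : zin y U by apply/U_list; exists y => //; apply: zeq_refl.
have Hi : index v vs < n by rewrite index_mem.
by exists (Ordinal Hi); rewrite inE; apply/asboolP; rewrite nth_index.
Qed.

End FiniteModelToGraph.

Lemma finite_model_graph phi : fin_satisfiable phi ->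
  exists (P : finType) (T : {set P} -> {set P}),
    [/\ #|P| <= 2 ^ size (vars phi) - 1, accessible_graph T,
        has_topological_order T & fulfills T phi].
Proof.
case=> M [Hsat [l Hl]]; exists (Place phi M l), (@targets phi M l); split.
- exact: card_Place.
- exact: targets_accessible.
- by exists (place_lt Hl); apply: place_lt_topological.
- by exists (place_set phi M l); apply: place_set_fulfilling.
Qed.

Section GraphToModel.
Variables (P : finType) (T : {set P} -> {set P}) (lt : rel P).
Hypothesis T_accessible : accessible_graph T.
Hypothesis lt_topological : topological_order T lt.

Definition is_source (p : P) : bool := [forall A : {set P}, is_node A ==> (p \notin T A)].

Lemma is_sourceP p : reflect (source_place T p) (is_source p).
Proof.
apply: (iffP forallP) => H A; last by apply/implyP; apply: H.
by move=> HA; move: (H A); rewrite HA.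
Qed.

Definition rk (p : P) : nat := #|[set q | lt q p]|.

Lemma rk_lt p q : lt p q -> rk p < rk q.
Proof.
case: lt_topological => -[Hirr Htr _] _ Hpq; apply: proper_card; apply/properP; split.
- by apply/subsetP => r; rewrite !inE => Hr; apply: Htr Hr Hpq.
- by exists p; rewrite !inE ?Hpq ?Hirr.
Qed.

Lemma rk_max (A : {set P}) m : m \in A -> (forall a, a \in A -> rk a <= rk m) ->
  is_max lt A m.
Proof.
case: lt_topological => -[_ _ Htot] _ Hm H; split=> // a Ha Hne.
by case/orP: (Htot _ _ Hne) => // /rk_lt; have := H a Ha; lia.
Qed.

Lemma rk_max_exists (A : {set P}) : A != set0 ->
  exists2 m, m \in A & forall a, a \in A -> rk a <= rk m.
Proof. by case/set0Pn => a0 /(arg_maxnP rk) [m Hm Hmax]; exists m. Qed.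

Definition topmost (A : {set P}) : option P :=
  [pick r in T A | [forall r' in T A, rk r' <= rk r]].

Lemma topmost_spec A : T A != set0 ->
  exists r, [/\ topmost A = Some r, r \in T A & forall r', r' \in T A -> rk r' <= rk r].
Proof.
move=> HT; rewrite /topmost; case: pickP => [r /andP [Hr /forall_inP Hm]|H].
  by exists r.
case: (rk_max_exists HT) => m Hm Hmax; move: (H m); rewrite Hm /=.
by move/negP; case; apply/forall_inP.
Qed.

Definition top_target (A : {set P}) (d : P) : P := odflt d (topmost A).

Lemma top_target_default A d d' : T A != set0 -> top_target A d = top_target A d'.
Proof. by case/topmost_spec => r [E _ _]; rewrite /top_target E. Qed.

Lemma top_target_above A d : is_tnode T A ->
  forall a, a \in A -> rk a < rk (top_target A d).
Proof.
case/andP => HA HT a Ha; case: (topmost_spec HT) => r [E Hin Hmax].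
rewrite /top_target E /=.
have HA0 : A != set0 by rewrite -card_gt0; case/andP: HA.
case: (rk_max_exists HA0) => m Hm Hmaxm.
have Hlt : lt m r.
  case: lt_topological => _ Htop.
  by apply: (Htop A); [rewrite /is_tnode HA | apply: rk_max | apply: rk_max].
by have := rk_lt Hlt; have := Hmaxm a Ha; lia.
Qed.

Fixpoint reached (k : nat) : {set P} :=
  if k is k'.+1 then
    reached k' :|: \bigcup_(A | is_node A && (A \subset reached k')) T A
  else [set p | is_source p].

Lemma reached_mono k k' : k <= k' -> reached k \subset reached k'.
Proof.
move=> /subnK <-; elim: (k' - k) => [|j IH] //=.
by apply: subset_trans IH (subsetUl _ _).
Qed.

Lemma reached_seq (s : seq P) : (forall x, x \in s -> exists k, x \in reached k) ->
  exists k, {subset s <= reached k}.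
Proof.
elim: s => [|y s IH] H; first by exists 0.
case: (H y (mem_head _ _)) => k1 Hk1.
case: IH => [x Hx|k2 Hk2]; first by apply: H; rewrite in_cons Hx orbT.
exists (maxn k1 k2) => x; rewrite in_cons => /orP [/eqP ->|/Hk2].
- exact: (subsetP (reached_mono (leq_maxl _ _))).
- exact: (subsetP (reached_mono (leq_maxr _ _))).
Qed.

Lemma reached_all p : exists k, p \in reached k.
Proof.
suff : p \in [set q | asbool (exists k, q \in reached k)] by rewrite inE => /asboolP.
apply: T_accessible => [q /is_sourceP Hq|A HA HAS].
  by rewrite inE; apply/asboolP; exists 0; rewrite inE.
case: (reached_seq (s := enum A)) => [x|k Hk].
  by rewrite mem_enum => /(subsetP HAS); rewrite inE => /asboolP.
apply/subsetP => r Hr; rewrite inE; apply/asboolP; exists k.+1.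
rewrite /= in_setU; apply/orP; right; apply/bigcupP; exists A => //.
by rewrite HA; apply/subsetP => x Hx; apply: Hk; rewrite mem_enum.
Qed.

Definition lev (p : P) : nat := ex_minn (reached_all p).

Lemma lev_reached p : p \in reached (lev p).
Proof. by rewrite /lev; case: ex_minnP. Qed.

Lemma lev_min p k : p \in reached k -> lev p <= k.
Proof. by rewrite /lev; case: ex_minnP => m _ H /H. Qed.

Lemma lev_source p : is_source p -> lev p = 0.
Proof. by move=> H; apply/eqP; rewrite -leqn0; apply: lev_min; rewrite inE. Qed.

Lemma lev_nonsource r : ~~ is_source r ->
  exists a b, [/\ r \in T [set a; b], lev a < lev r & lev b < lev r].
Proof.
move=> Hr; have := lev_reached r; have Hmin := @lev_min r.
case E : (lev r) => [|k] /=; first by rewrite inE (negbTE Hr).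
rewrite in_setU => /orP [/Hmin|]; first by rewrite E ltnn.
case/bigcupP => A /andP [/nodeP [a [b ->]] HAs] HrA; exists a, b.
by split=> //; rewrite ltnS; apply: lev_min; apply: (subsetP HAs); rewrite !inE eqxx ?orbT.
Qed.

(* A chosen node {parent1 r, parent2 r} of lower level having [r] as a target
   (meaningful when [r] is not a source). *)
Definition parents (r : P) : option (P * P) :=
  [pick ab : P * P |
     [&& r \in T [set ab.1; ab.2], lev ab.1 < lev r & lev ab.2 < lev r]].
Definition parent1 r := if parents r is Some ab then ab.1 else r.
Definition parent2 r := if parents r is Some ab then ab.2 else r.

Lemma parents_spec r : ~~ is_source r ->
  [/\ r \in T [set parent1 r; parent2 r], lev (parent1 r) < lev r
     & lev (parent2 r) < lev r].
Proof.
move=> Hr; rewrite /parent1 /parent2 /parents.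
case: pickP => [[a b] /= /and3P []//|H].
case: (lev_nonsource Hr) => a [b [H1 H2 H3]].
by move: (H (a, b)); rewrite /= H1 H2 H3.
Qed.

Lemma lev_nonsource_pos r : ~~ is_source r -> 0 < lev r.
Proof. by case/parents_spec => _ H _; apply: leq_ltn_trans H. Qed.

(* Terms denote hereditarily finite sets: an atom [Atom s i] is the [i]-th
   copy of an element of the source place [s], and [Pair a b] is {a, b}. *)
Inductive term := Atom of P & nat | Pair of term & term.

Definition K : nat := #|P|.

Definition idx (r : P) : nat := enum_rank r.

Lemma idx_lt r : idx r < K.
Proof. exact: ltn_ord. Qed.

Lemma idx_inj : injective idx.
Proof. by move=> x y /val_inj /enum_rank_inj. Qed.

(* Atoms are coded by three bits, pairs by (at most) two. *)
Definition atom_code (x i : nat) : nat :=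
  PeanoNat.Nat.setbit (PeanoNat.Nat.setbit (PeanoNat.Nat.setbit 0 0) x.+1) (K + i).+1.

Lemma testbit_atom_code x i m :
  Nat.testbit (atom_code x i) m = [|| m == 0, m == x.+1 | m == (K + i).+1].
Proof.
rewrite /atom_code !PeanoNat.Nat.setbit_eqb PeanoNat.Nat.bits_0 !nat_eqbE orbF.
by rewrite !(eq_sym _ m); case: (m == 0); case: (m == x.+1); case: (m == _).
Qed.

(* The code of a term: [ack (code t)] is the set denoted by [t]. *)
Fixpoint code (t : term) : nat :=
  match t with
  | Atom s i => atom_code (idx s) i
  | Pair a b => pair_code (code a) (code b)
  end.

Lemma testbit_eq n n' m : n = n' -> Nat.testbit n m = Nat.testbit n' m.
Proof. by move->. Qed.

Lemma atom_code_inj s i s' i' :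
  atom_code (idx s) i = atom_code (idx s') i' -> s = s' /\ i = i'.
Proof.
move=> E; have H1 := testbit_eq (idx s).+1 E; have H2 := testbit_eq (K + i).+1 E.
rewrite !testbit_atom_code !eqxx ?orbT in H1 H2.
suff [/idx_inj -> ->] : idx s = idx s' /\ i = i' by [].
by have := idx_lt s; have := idx_lt s'; lia.
Qed.

(* Three distinct bits cannot fit into two. *)
Lemma atom_code_neq_pair s i c d : atom_code (idx s) i <> pair_code c d.
Proof.
move=> E; have H0 := testbit_eq 0 E; have H1 := testbit_eq (idx s).+1 E.
have H2 := testbit_eq (K + i).+1 E.
rewrite !testbit_atom_code !testbit_pair_code !eqxx ?orbT in H0 H1 H2.
by have := idx_lt s; lia.
Qed.

Lemma pair_code_inj c d c' d' : pair_code c d = pair_code c' d' ->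
  (c = c' /\ d = d') \/ (c = d' /\ d = c').
Proof.
move=> E; have Hc := testbit_eq c E; have Hd := testbit_eq d E.
have Hc' := testbit_eq c' E; have Hd' := testbit_eq d' E.
rewrite !testbit_pair_code !eqxx ?orbT in Hc Hd Hc' Hd'.
by move: Hc Hd Hc' Hd'; lia.
Qed.

(* The tags [idx r] and [K + j] keep the
   cores of distinct places (and of distinct tags [j]) apart. *)
Fixpoint core_fuel (f : nat) (r : P) (j : nat) : term :=
  if f is f'.+1 then
    if is_source r then Atom r j
    else Pair (core_fuel f' (parent1 r) (idx r)) (core_fuel f' (parent2 r) (K + j))
  else Atom r j.

Definition core (r : P) (j : nat) : term := core_fuel (lev r) r j.

Lemma core_fuel_stable f f' r j : lev r <= f -> lev r <= f' ->
  core_fuel f r j = core_fuel f' r j.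
Proof.
elim: f f' r j => [|f IH] [|f'] r j //= H H';
  case Hs: (is_source r) => //; have := lev_nonsource_pos (negbT Hs); try lia.
case/parents_spec: (negbT Hs) => _ H1 H2 _.
by congr Pair; apply: IH; lia.
Qed.

Lemma core_source r j : is_source r -> core r j = Atom r j.
Proof. by move=> Hs; rewrite /core (lev_source Hs). Qed.

Lemma core_pair r j : ~~ is_source r ->
  core r j = Pair (core (parent1 r) (idx r)) (core (parent2 r) (K + j)).
Proof.
move=> Hs; have := lev_nonsource_pos Hs; case/parents_spec: (Hs) => _ H1 H2.
rewrite /core; case: (lev r) H1 H2 => [//|m] H1 H2 _ /=; rewrite (negbTE Hs).
by congr Pair; apply: core_fuel_stable; lia.
Qed.

Lemma core_code_inj r j r' j' : code (core r j) = code (core r' j') -> r = r' /\ j = j'.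
Proof.
move=> E; move: {2}(lev r).+1 (ltnSn (lev r)) E => m.
elim: m r j r' j' => [|m IH] r j r' j' // Hm.
case Hs: (is_source r); case Hs': (is_source r').
- by rewrite !core_source //= => /atom_code_inj.
- by rewrite (core_source j Hs) (core_pair j' (negbT Hs')) => /atom_code_neq_pair.
- by rewrite (core_pair j (negbT Hs)) (core_source j' Hs') => /esym/atom_code_neq_pair.
rewrite (core_pair j (negbT Hs)) (core_pair j' (negbT Hs')) /=.
case/parents_spec: (negbT Hs) => _ H1 H2.
case/pair_code_inj => -[E1 E2].
- have [_ /idx_inj <-] := IH _ _ _ _ (leq_trans H1 Hm) E1.
  by have [_ /eqP] := IH _ _ _ _ (leq_trans H2 Hm) E2; rewrite eqn_add2l => /eqP.
- have [_ E] := IH _ _ _ _ (leq_trans H1 Hm) E1.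
  by have := idx_lt r; rewrite E ltnNge leq_addr.
Qed.

Definition core_place (c : nat) : option P :=
  [pick r | asbool (exists j, c = code (core r j))].

Lemma core_placeE r j : core_place (code (core r j)) = Some r.
Proof.
rewrite /core_place; case: pickP => [r' /asboolP [j' /esym /core_code_inj [-> _]] //|].
by move/(_ r)/asboolP; case; exists j.
Qed.

Lemma core_placeP c r : core_place c = Some r -> exists j, c = code (core r j).
Proof. by rewrite /core_place; case: pickP => // r' /asboolP H [<-]. Qed.

Fixpoint place (t : term) : P :=
  match t with
  | Atom s _ => s
  | Pair a b => odflt (top_target [set place a; place b] (place a)) (core_place (code t))
  end.

Lemma place_pair a b : place (Pair a b) =
  odflt (top_target [set place a; place b] (place a)) (core_place (code (Pair a b))).
Proof. by []. Qed.

Lemma place_core r j : place (core r j) = r.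
Proof.
case Hs: (is_source r); first by rewrite core_source.
have E := core_pair j (negbT Hs).
by rewrite {1}E place_pair -E core_placeE.
Qed.

Definition max_lev : nat := \max_(p : P) lev p.
Definition tag_bound : nat := K * max_lev.+1 + 1.

Lemma lev_le_max r : lev r <= max_lev.
Proof. exact: (leq_bigmax r). Qed.

Fixpoint valid (t : term) : bool :=
  match t with
  | Atom s i => is_source s && (i < tag_bound)
  | Pair a b => [&& valid a, valid b & is_tnode T [set place a; place b]]
  end.

Lemma valid_core r j : j + K * lev r < tag_bound -> valid (core r j).
Proof.
move: {2}(lev r).+1 (ltnSn (lev r)) => m; elim: m r j => [|m IH] r j // Hm Hb.
case Hs: (is_source r).
  by rewrite core_source //= Hs /=; apply: leq_ltn_trans Hb; apply: leq_addr.
case/parents_spec: (negbT Hs) => HT H1 H2.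
have Hk1 : K + K * lev (parent1 r) <= K * lev r by rewrite -mulnS leq_mul2l H1 orbT.
have Hk2 : K + K * lev (parent2 r) <= K * lev r by rewrite -mulnS leq_mul2l H2 orbT.
rewrite core_pair ?Hs //= !place_core; apply/and3P; split.
- by apply: IH; [lia | have := idx_lt r; lia].
- by apply: IH; lia.
- by rewrite /is_tnode is_node2; apply/set0Pn; exists r.
Qed.

Lemma valid_core0 r : valid (core r 0).
Proof.
apply: valid_core; rewrite /tag_bound add0n.
have : K * lev r <= K * max_lev by rewrite leq_mul2l lev_le_max orbT.
by rewrite mulnS; lia.
Qed.

Lemma place_code t t' : valid t -> code t = code t' -> place t = place t'.
Proof.
elim: t t' => [s i|a IHa b IHb] [s' i'|c d] /=.
- by move=> _ /atom_code_inj [].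
- by move=> _ /atom_code_neq_pair.
- by move=> _ /esym/atom_code_neq_pair.
case/and3P => Ha Hb /andP [_ HT] E; rewrite E.
case: (core_place _) => //=; case/pair_code_inj: E => -[/(IHa _ Ha) Ea /(IHb _ Hb) Eb].
- by rewrite Ea Eb.
- by rewrite Ea Eb setU2C; apply: top_target_default; rewrite -Ea -Eb setU2C.
Qed.

Lemma code_core_pair a b r j : code (Pair a b) = code (core r j) ->
  ~~ is_source r /\
  ((code a = code (core (parent1 r) (idx r)) /\ code b = code (core (parent2 r) (K + j))) \/
   (code a = code (core (parent2 r) (K + j)) /\ code b = code (core (parent1 r) (idx r)))).
Proof.
case Hs: (is_source r).
  by rewrite (core_source j Hs) => /esym/atom_code_neq_pair.
by rewrite (core_pair j (negbT Hs)) => /pair_code_inj.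
Qed.

Lemma place_in_target a b : valid (Pair a b) ->
  place (Pair a b) \in T [set place a; place b].
Proof.
case/and3P => Ha Hb /andP [_ HT]; rewrite place_pair.
case E: (core_place _) => [r|]; last first.
  by case: (topmost_spec HT) => r' [E' Hr _]; rewrite /top_target E'.
case/core_placeP: E => j /code_core_pair [Hs Ecode].
case/parents_spec: Hs => HTr _ _.
case: Ecode => -[/(place_code Ha) Ea /(place_code Hb) Eb];
  by rewrite Ea Eb !place_core // setU2C.
Qed.

Fixpoint terms_upto (k : nat) : seq term :=
  if k is k'.+1 then
    terms_upto k' ++ [seq Pair a b | a <- terms_upto k', b <- terms_upto k']
  else [seq Atom s i | s <- enum P, i <- iota 0 tag_bound].

Lemma terms_upto_mono k k' t : k <= k' ->
  List.In t (terms_upto k) -> List.In t (terms_upto k').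
Proof.
move=> /subnK <-; elim: (k' - k) => [|d IH] //= H.
by apply/List.in_app_iff; left; apply: IH.
Qed.

Lemma pair_terms_upto k a b : List.In a (terms_upto k) -> List.In b (terms_upto k) ->
  List.In (Pair a b) (terms_upto k.+1).
Proof. by move=> Ha Hb; apply/List.in_app_iff; right; apply: In_allpairs. Qed.

Lemma atom_terms_upto k s i : i < tag_bound -> List.In (Atom s i) (terms_upto k).
Proof.
move=> Hi; apply: (terms_upto_mono (leq0n k)); apply: In_allpairs; apply/InE.
- by rewrite mem_enum.
- by rewrite mem_iota.
Qed.

Lemma core_terms_upto t r j : valid t -> code t = code (core r j) ->
  List.In t (terms_upto (lev r)).
Proof.
elim: t r j => [s i|a IHa b IHb] r j; first by case/andP => _ /atom_terms_upto.
case/and3P => Ha Hb _ /code_core_pair [Hs Ecode].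
case/parents_spec: (Hs) => _ H1 H2; rewrite -(prednK (lev_nonsource_pos Hs)).
have lower u p : lev p < lev r ->
    List.In u (terms_upto (lev p)) -> List.In u (terms_upto (lev r).-1).
  by move=> Hp; apply: terms_upto_mono; lia.
case: Ecode => -[/(IHa _ _ Ha) Ea /(IHb _ _ Hb) Eb]; apply: pair_terms_upto.
- exact: lower H1 Ea.
- exact: lower H2 Eb.
- exact: lower H2 Ea.
- exact: lower H1 Eb.
Qed.

Lemma rk_le_K p : rk p <= K.
Proof. exact: max_card. Qed.

(* Every valid term has depth at most [max_lev + K]: non-core pairs climb
   strictly in the topological order. *)
Lemma valid_terms_upto t : valid t -> List.In t (terms_upto (max_lev + rk (place t))).
Proof.
elim: t => [s i /andP [_ /atom_terms_upto //]|a IHa b IHb Hv].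
case E: (core_place (code (Pair a b))) => [r|].
  case/core_placeP: (E) => j /(core_terms_upto Hv); apply: terms_upto_mono.
  by rewrite place_pair E /=; have := lev_le_max r; lia.
case/and3P: (Hv) => Ha Hb Htn; rewrite place_pair E /=.
have := top_target_above (place a) Htn (set21 _ _).
have := top_target_above (place a) Htn (set22 _ _).
move: (top_target _ _) => m H2 H1.
have -> : max_lev + rk m = (max_lev + (rk m).-1).+1 by lia.
apply: pair_terms_upto.
- by apply: terms_upto_mono (IHa Ha); lia.
- by apply: terms_upto_mono (IHb Hb); lia.
Qed.

Definition universe : seq term := [seq t <- terms_upto (max_lev + K) | valid t].

Lemma in_universe t : List.In t universe <-> valid t.
Proof.
rewrite In_filter; split=> [[]//|Hv]; split=> //.
by apply: terms_upto_mono (valid_terms_upto Hv); have := rk_le_K (place t); lia.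
Qed.

Variables (phi : bst_conj) (F : nat -> {set P}).
Hypothesis F_fulfilling : fulfilling T phi F.

Definition model (v : nat) : ZSet :=
  zlist [seq ack (code t) | t <- universe & place t \in F v].

Lemma model_elem w v : zin w (model v) -> exists2 t, valid t & zeq w (ack (code t)).
Proof.
case/zin_zlist => y /List.in_map_iff [t [<- /In_filter [/in_universe Ht _]]] E.
by exists t.
Qed.

Lemma in_model t w v : valid t -> zeq w (ack (code t)) ->
  zin w (model v) <-> place t \in F v.
Proof.
move=> Ht E; split=> [|Hp].
- case/zin_zlist => y /List.in_map_iff [t' [<- /In_filter [/in_universe Ht' Hp]]] E'.
  have /ack_inj /(place_code Ht) -> : zeq (ack (code t)) (ack (code t')).
    exact: zeq_trans (zeq_sym E) E'.
  exact: Hp.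
- apply/zin_zlist; exists (ack (code t)) => //; apply/List.in_map_iff.
  by exists t; split=> //; apply/In_filter; split=> //; apply/in_universe.
Qed.

(* Valid atoms lie in source places, which are targets of no node. *)
Lemma valid_target_pair t A : valid t -> is_node A -> place t \in T A ->
  exists a b, t = Pair a b.
Proof.
case: t => [s i /andP [/is_sourceP Hs _]|a b _] HA HT; last by exists a, b.
by move: (Hs A HA); rewrite HT.
Qed.

Lemma model_union x y z : F x = F y :|: F z ->
  zeq (model x) (zunion2 (model y) (model z)).
Proof.
move=> E; apply/zextP => w; rewrite zin_union2; split.
- move=> Hw; case: (model_elem Hw) => t Ht Et; move/(in_model _ Ht Et): Hw.
  by rewrite E in_setU => /orP [] H; [left|right]; apply/(in_model _ Ht Et).
- case=> Hw; case: (model_elem Hw) => t Ht Et; move/(in_model _ Ht Et): Hw => H;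
    by apply/(in_model _ Ht Et); rewrite E in_setU H ?orbT.
Qed.

Lemma model_diff x y z : F x = F y :\: F z ->
  forall w, zin w (model x) <-> zin w (model y) /\ ~ zin w (model z).
Proof.
move=> E w; split.
- move=> Hw; case: (model_elem Hw) => t Ht Et; move/(in_model _ Ht Et): Hw.
  rewrite E in_setD => /andP [Hz Hy]; split; first by apply/(in_model _ Ht Et).
  by move/(in_model _ Ht Et); apply/negP.
- case=> Hw Hn; case: (model_elem Hw) => t Ht Et; move/(in_model _ Ht Et): Hw => H.
  apply/(in_model _ Ht Et); rewrite E in_setD H andbT.
  by apply/negP => /(in_model _ Ht Et).
Qed.

(* Every place is the place of a valid term, namely of a core term. *)
Lemma model_neq x y : F x <> F y -> ~ zeq (model x) (model y).
Proof.
move=> Hne E; apply: Hne; apply/setP => p.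
have Hv := valid_core0 p; have Ec := zeq_refl (ack (code (core p 0))).
rewrite -(place_core p 0); apply/idP/idP.
- by move/(in_model _ Hv Ec)/(zin_eqr E)/(in_model _ Hv Ec).
- by move/(in_model _ Hv Ec)/(zin_eqr (zeq_sym E))/(in_model _ Hv Ec).
Qed.

Lemma ack_code_pair a b : zis_pair (ack (code (Pair a b))) (ack (code a)) (ack (code b)).
Proof. exact: zis_pair_ack. Qed.

(* Elements of [model x] are pairs of elements of [model y] and [model z]:
   by (c2) they are pairs, and by (c3) their components lie in [y] and [z]. *)
Lemma model_tensor_split x y z : lit_fulfilled T F (LTensor x y z) ->
  forall w, zin w (model x) ->
  exists u v, [/\ zin u (model y), zin v (model z) & zis_pair w u v].
Proof.
case=> _ Hc2 Hc3 w Hw; case: (model_elem Hw) => t Ht Et.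
move/(in_model _ Ht Et): Hw => Hx.
case/bigcupP: (subsetP Hc2 _ Hx) => A /andP [HA _] HtA.
case: (valid_target_pair Ht HA HtA) => a [b Eab]; subst t.
case/and3P: (Ht) => Ha Hb _.
have Htens : in_tens (F y) (F z) [set place a; place b].
  apply: contraT => Hn.
  have : place (Pair a b) \in
      (\bigcup_(A | is_node A && ~~ in_tens (F y) (F z) A) T A) :&: F x.
    rewrite in_setI Hx andbT; apply/bigcupP; exists [set place a; place b].
      by rewrite is_node2.
    exact: place_in_target.
  by rewrite Hc3 in_set0.
case/existsP: Htens => p /andP [Hp /existsP [q /andP [Hq /eqP /set2_eq]]].
have Ea := zeq_refl (ack (code a)); have Eb := zeq_refl (ack (code b)).
have Hpair := zis_pair_resp (zeq_sym Et) (zeq_refl _) (zeq_refl _) (ack_code_pair a b).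
case=> -[Epa Eqb].
- exists (ack (code a)), (ack (code b)); split=> //.
  + by apply/(in_model _ Ha Ea); rewrite Epa.
  + by apply/(in_model _ Hb Eb); rewrite Eqb.
- exists (ack (code b)), (ack (code a)); split; last exact: zis_pair_sym.
  + by apply/(in_model _ Hb Eb); rewrite Eqb.
  + by apply/(in_model _ Ha Ea); rewrite Epa.
Qed.

Lemma model_tensor_pairs x y z : lit_fulfilled T F (LTensor x y z) ->
  forall u v w, zin u (model y) -> zin v (model z) -> zis_pair w u v -> zin w (model x).
Proof.
case=> Hc1 _ _ u v w Hu Hv Hw.
case: (model_elem Hu) => a Ha Ea; case: (model_elem Hv) => b Hb Eb.
move/(in_model _ Ha Ea): Hu => Hpa; move/(in_model _ Hb Eb): Hv => Hpb.
case: (Hc1 _ _ Hpa Hpb) => HTne HTsub.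
have Hab : valid (Pair a b) by rewrite /= Ha Hb /is_tnode is_node2 HTne.
apply/(in_model _ Hab); last exact: (subsetP HTsub) (place_in_target Hab).
apply: zis_pair_eq Hw _.
exact: zis_pair_resp (zeq_refl _) (zeq_sym Ea) (zeq_sym Eb) (ack_code_pair a b).
Qed.

Lemma model_satisfies : satisfies model phi.
Proof.
move=> lit /F_fulfilling; case: lit => [x y z|x y z|x y z|x y] /= Hf.
- exact: model_union.
- exact: model_diff.
- move=> w; split; first exact: model_tensor_split.
  by case=> u [v [Hu Hv Hp]]; apply: model_tensor_pairs Hf _ _ _ Hu Hv Hp.
- exact: model_neq.
Qed.

Lemma model_HF : zHF (zbigunion (map model (vars phi))).
Proof.
apply: zHF_bigunion => y /List.in_map_iff [v [<- _]]; apply: zHF_zlist.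
by move=> y' /List.in_map_iff [t [<- _]]; apply: zHF_ack.
Qed.

End GraphToModel.

Lemma graph_hf_model phi (P : finType) (T : {set P} -> {set P}) :
  accessible_graph T -> has_topological_order T -> fulfills T phi -> hf_satisfiable phi.
Proof.
move=> Hacc [lt Hlt] [F HF].
exists (model lt Hacc F); split; [exact: (model_satisfies Hacc Hlt HF) | exact: model_HF].
Qed.

Lemma hf_model_finite phi : hf_satisfiable phi -> fin_satisfiable phi.
Proof. by case=> M [Hsat Hhf]; exists M; split=> //; apply: zHF_finite. Qed.

Theorem mainTheorem3 (phi : bst_conj) :
  (fin_satisfiable phi <-> hf_satisfiable phi) /\
  (fin_satisfiable phi <->
     exists (P : finType) (T : {set P} -> {set P}),
       [/\ (#|P| <= 2 ^ size (vars phi) - 1)%N,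
           accessible_graph T,
           has_topological_order T
         & fulfills T phi]).
Proof.
have hf_fin := @hf_model_finite phi.
have graph_hf : (exists (P : finType) (T : {set P} -> {set P}),
    [/\ (#|P| <= 2 ^ size (vars phi) - 1)%N, accessible_graph T,
        has_topological_order T & fulfills T phi]) -> hf_satisfiable phi.
  by case=> P [T [_ Hacc Htop Hful]]; apply: graph_hf_model Hacc Htop Hful.
have fin_graph := @finite_model_graph phi.
split; split.
- by move/fin_graph/graph_hf.
- exact: hf_fin.
- exact: fin_graph.
- by move/graph_hf/hf_fin.
Qed.
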